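(* Let $N$ be a natural number, $P=\{a\subseteq N: |a|\geq 2\}$, and let $\|\cdot\|_3$ be the graph coloring norm on subsets of $P$ (defined in the context). Let $n$ be a natural number and $A\subseteq P$. If $A$ cannot be split by $2^n$ sets, then $\|A\|_3>n$.
   Context: $N=\{0,\ldots,N-1\}$. For $A\subseteq P$ and $z\subseteq N$ let $A\restriction z=\{a\in A: a\subseteq z\}$. The relation ''$\|A\|_3\geq m$'' is defined recursively: $\|A\|_3\geq 0$ always; $\|A\|_3\geq 1$ iff $A\neq\emptyset$; for $m\geq 1$, $\|A\|_3\geq m+1$ iff for every $z\subseteq N$ either $\|A\restriction z\|_3\geq m$ or $\|A\restriction(N\setminus z)\|_3\geq m$. Then $\|A\|_3$ is the largest $m$ with $\|A\|_3\geq m$. $A$ is split by sets $V_0,\ldots,V_{c-1}$ (pairwise disjoint, possibly empty, with union $N$) if $A\restriction V_j=\emptyset$ for every $j<c$; $A$ can be split by $c$ sets if such a partition of $N$ into $c$ sets exists. *)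

From mathcomp Require Import all_boot all_order.
Set Implicit Arguments. Unset Strict Implicit. Unset Printing Implicit Defensive.

(* The ground set N = {0,...,N-1} is the finite type 'I_N; subsets are {set 'I_N}. *)

Definition Pset (N : nat) : {set {set 'I_N}} := [set a : {set 'I_N} | 1 < #|a|].

Definition restr (N : nat) (A : {set {set 'I_N}}) (z : {set 'I_N}) : {set {set 'I_N}} :=
  [set a in A | a \subset z].

(* norm3_ge A m  <=>  ||A||_3 >= m, by the recursive definition of the paper. *)
Fixpoint norm3_ge (N : nat) (A : {set {set 'I_N}}) (m : nat) {struct m} : bool :=
  match m with
  | 0 => true
  | 1 => A != set0
  | m'.+1 => [forall z : {set 'I_N},
                norm3_ge (restr A z) m' || norm3_ge (restr A (~: z)) m']
  end.

(* A is split by the sets V_0,...,V_{c-1} (pairwise disjoint, union N): encoded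
   by the map f : 'I_N -> 'I_c with V_j = f^{-1}(j); A |` V_j is empty for all j. *)
Definition split_by (N c : nat) (A : {set {set 'I_N}}) (f : 'I_N -> 'I_c) : Prop :=
  forall j : 'I_c, restr A [set x | f x == j] = set0.

Definition can_be_split (N c : nat) (A : {set {set 'I_N}}) : Prop :=
  exists f : 'I_N -> 'I_c, split_by A f.

From mathcomp Require Import all_boot all_order.

Set Implicit Arguments.
Unset Strict Implicit.
Unset Printing Implicit Defensive.

(** If [||A||_3 >= 1] fails then [A] is
    empty and one set splits it.  If [||A||_3 >= n + 1] fails, some [z] has neither
    [||A|`z||_3 >= n] nor [||A|`(N\z)||_3 >= n], so each of these restrictions is
    split by [2^(n-1)] sets; placing the two partitions side by side, one inside
    [z] and one inside its complement, splits [A] by [2^n] sets. *)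

Lemma restr_restr (N : nat) (A : {set {set 'I_N}}) (z w : {set 'I_N}) :
  restr (restr A z) w = restr A (z :&: w).
Proof. by apply/setP => a; rewrite !inE subsetI andbA. Qed.

Lemma split_by_set0 (N c : nat) (f : 'I_N -> 'I_c) : split_by set0 f.
Proof. by move=> j; apply/setP => a; rewrite !inE. Qed.

Section Glue.

Variables (N c1 c2 : nat) (z : {set 'I_N}).
Variables (f1 : 'I_N -> 'I_c1) (f2 : 'I_N -> 'I_c2).

Definition glue (x : 'I_N) : 'I_(c1 + c2) :=
  if x \in z then lshift c2 (f1 x) else rshift c1 (f2 x).

Lemma glue_preimage_lshift (j : 'I_c1) :
  [set x | glue x == lshift c2 j] = z :&: [set x | f1 x == j].
Proof.
by apply/setP => x; rewrite !inE /glue; case: ifP; rewrite ?eq_lshift ?eq_rlshift.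
Qed.

Lemma glue_preimage_rshift (j : 'I_c2) :
  [set x | glue x == rshift c1 j] = ~: z :&: [set x | f2 x == j].
Proof.
by apply/setP => x; rewrite !inE /glue; case: ifP; rewrite ?eq_rshift ?eq_lrshift.
Qed.

Lemma split_by_glue (A : {set {set 'I_N}}) :
  split_by (restr A z) f1 -> split_by (restr A (~: z)) f2 -> split_by A glue.
Proof.
move=> split1 split2 j; rewrite -(splitK j); case: (split j) => [j1|j2] /=.
  by rewrite glue_preimage_lshift -restr_restr.
by rewrite glue_preimage_rshift -restr_restr.
Qed.

End Glue.

Lemma can_be_split_of_not_norm3_ge (N n : nat) (A : {set {set 'I_N}}) :
  ~~ norm3_ge A n.+1 -> can_be_split (2 ^ n) A.
Proof.
elim: n A => [|n IHn] A.
  by move/negbNE/eqP->; exists (fun=> ord0); apply: split_by_set0.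
move=> /forallPn[z]; rewrite negb_or => /andP[/IHn[f1 split1] /IHn[f2 split2]].
rewrite expnS mul2n -addnn.
by exists (glue z f1 f2); apply: split_by_glue.
Qed.

Theorem theorem5p11 (N n : nat) (A : {set {set 'I_N}}) :
  A \subset Pset N ->
  ~ can_be_split (2 ^ n) A ->
  norm3_ge A n.+1.
Proof.
(* The contrapositive holds for every family [A], not only for [A \subset Pset N]. *)
move=> _ not_split; apply/negPn/negP => /can_be_split_of_not_norm3_ge.
exact: not_split.
Qed.
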